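(* Let $d\ge1$, $c\in C(d,2,p)$ and $S=\mathbf k[x,y]$. With notation $\mathcal Z(c,d)=\{0=t_0<\dots<t_\ell\}$, $\delta_{t_r}$, and $\phi_\ell=p^{t_\ell}-\sum_{k=0}^{\ell-1}\mathrm{Cont}(\delta_{t_k})p^{t_k}$, we have $$\operatorname{reg}(S/I_{c,d})=\max\{e\ge0:(S/I_{c,d})_e\ne0\}=d+\phi_\ell-2.$$
   Context: $\mathbf k$ algebraically closed of characteristic $p>0$. Base-$p$ expansion $d=\sum_{j=0}^Md_jp^j$, $d_M\ne0$. The carry pattern $(c_1,\dots,c_M)$ of $x^ay^b$ ($a+b=d$) is determined by $\sum_{j<\ell}(a_j+b_j)p^j=c_\ell p^\ell+\sum_{j<\ell}d_jp^j$, $1\le\ell\le M$ ($c_i=0$ for $i<1$, $i>M$). $C(d,2,p)$ is the set of such patterns, ordered componentwise; $I_{c,d}$ is generated by the degree-$d$ monomials with carry pattern $\le c$. $\mathcal Z(c,d)=\{0\le k\le M:c_k=0,\ (c_{k-1},d_{k-1})\ne(0,p-1)\}$ with the convention $0\in\mathcal Z(c,d)$; $t_{\ell+1}=M+1$; $\delta_{t_r}=(d_{t_r},\dots,d_{t_{r+1}-1})$ with $\mathrm{Cont}(\delta_{t_r})=\sum_{k=t_r}^{t_{r+1}-1}d_kp^{k-t_r}$. $\operatorname{reg}$ is Castelnuovo--Mumford regularity. *)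

From HB Require Import structures.
From mathcomp Require Import all_boot all_order all_algebra.
Set Implicit Arguments. Unset Strict Implicit. Unset Printing Implicit Defensive.
Import Order.TTheory GRing.Theory Num.Theory.

Definition digit (p d j : nat) : nat := (d %/ p ^ j) %% p.

Definition topM (p d : nat) : nat := trunc_log p d.

(* c_l for x^a y^b : sum_{j<l}(a_j+b_j)p^j = (a %% p^l) + (b %% p^l)
   = c_l p^l + (d %% p^l)   (when a + b = d) *)
Definition carry (p a b l : nat) : nat := (a %% p ^ l + b %% p ^ l) %/ p ^ l.

Definition carry_pat (p d a : nat) (l : nat) : nat :=
  if (1 <= l <= topM p d) then carry p a (d - a) l else 0.

Definition inC (p d : nat) (c : nat -> nat) : Prop :=
  exists2 a, a <= d & forall l, c l = carry_pat p d a l.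

(* x^a y^(d-a) is a generator of I_{c,d}: carry pattern <= c componentwise *)
Definition gen (p d : nat) (c : nat -> nat) (a : nat) : bool :=
  (a <= d) && all (fun l => carry_pat p d a l <= c l) (iota 1 (topM p d)).

(* monomial x^u y^v lies in the monomial ideal I_{c,d} iff it is divisible
   by one of its monomial generators *)
Definition inI (p d : nat) (c : nat -> nat) (u v : nat) : bool :=
  has (fun a => [&& gen p d c a, a <= u & d - a <= v]) (iota 0 d.+1).

(* dimension (0 or 1) of the multigraded piece (S/I)_{(a-da, b-db)} *)
Definition nS (p d : nat) (c : nat -> nat) (a b da db : nat) : nat :=
  [&& da <= a, db <= b & ~~ inI p d c (a - da) (b - db)].

(* ---------- Koszul complex K(x,y; S/I) in multidegree (a,b) ----------
   0 -> (S/I)_{(a-1,b-1)} -> (S/I)_{(a-1,b)} (+) (S/I)_{(a,b-1)} -> (S/I)_{(a,b)} -> 0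
   d2 u = (-y u, x u),  d1 (f,g) = x f + y g  (row-vector convention).
   Multiplication by a variable between monomial pieces of dim <= 1 is
   the 1x1 identity when both pieces are nonzero. *)
Section Koszul.
Variables (k : fieldType) (p d : nat) (c : nat -> nat) (a b : nat).
Definition kd0 := nS p d c a b 0 0.
Definition kd1x := nS p d c a b 1 0.
Definition kd1y := nS p d c a b 0 1.
Definition kd2 := nS p d c a b 1 1.
Definition kdiff1 : 'M[k]_(kd1x + kd1y, kd0) :=
  col_mx (const_mx 1%R) (const_mx 1%R).
Definition kdiff2 : 'M[k]_(kd2, kd1x + kd1y) :=
  row_mx (const_mx (-1)%R) (const_mx 1%R).
(* multigraded Betti number beta_{i,(a,b)} = dim_k Tor_i^S(S/I,k)_{(a,b)}
   = dim_k H_i(K(x,y; S/I))_{(a,b)} *)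
Definition mbetti (i : nat) : nat :=
  match i with
  | 0 => kd0 - \rank kdiff1
  | 1 => (kd1x + kd1y) - \rank kdiff1 - \rank kdiff2
  | 2 => kd2 - \rank kdiff2
  | _ => 0
  end.
End Koszul.

Definition betti (k : fieldType) (p d : nat) (c : nat -> nat) (i j : nat) : nat :=
  \sum_(a < j.+1) mbetti k p d c a (j - a) i.

Definition hilb (p d : nat) (c : nat -> nat) (e : nat) : nat :=
  \sum_(a < e.+1) nS p d c a (e - a) 0 0.

Definition reg_is (k : fieldType) (p d : nat) (c : nat -> nat) (R : int) : Prop :=
  (forall i j, betti k p d c i j <> 0 -> ((j%:Z%R - i%:Z%R)%R <= R)%R) /\
  (exists i j, betti k p d c i j <> 0 /\ (j%:Z%R - i%:Z%R)%R = R).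

Definition topdeg_is (p d : nat) (c : nat -> nat) (R : int) : Prop :=
  (forall e, hilb p d c e <> 0 -> (e%:Z%R <= R)%R) /\
  (exists e, hilb p d c e <> 0 /\ e%:Z%R = R).

Definition inZ (p d : nat) (c : nat -> nat) (k : nat) : bool :=
  (k == 0) ||
  [&& k <= topM p d, c k == 0 &
      ~~ ((c k.-1 == 0) && (digit p d k.-1 == p.-1))].

Definition tseq (p d : nat) (c : nat -> nat) : seq nat :=
  [seq k <- iota 0 (topM p d).+1 | inZ p d c k].

Definition ell (p d : nat) (c : nat -> nat) : nat := (size (tseq p d c)).-1.

(* t_r, with t_{ell+1} = M+1 *)
Definition tt (p d : nat) (c : nat -> nat) (r : nat) : nat :=
  nth (topM p d).+1 (tseq p d c) r.

Definition Cont (p d : nat) (c : nat -> nat) (r : nat) : nat :=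
  \sum_(tt p d c r <= j < tt p d c r.+1) digit p d j * p ^ (j - tt p d c r).

Definition phi (p d : nat) (c : nat -> nat) : int :=
  ((p ^ tt p d c (ell p d c))%:Z%R -
   (\sum_(r < ell p d c) Cont p d c r * p ^ tt p d c r)%:Z%R)%R.

From HB Require Import structures.
From mathcomp Require Import all_boot all_order all_algebra.
From mathcomp Require Import zify.
Import Order.TTheory GRing.Theory Num.Theory.

Set Implicit Arguments.
Unset Strict Implicit.
Unset Printing Implicit Defensive.

(* Since carries of two-term sums are 0 or 1, x^a y^(d-a) generates I_{c,d}
   exactly when a mod p^t <= d mod p^t for every t in Z(c,d).  Consecutive
   generator exponents differ by at most phi = p^T - (d mod p^T), T = t_ell:
   round a up to a multiple of p^S, S the largest t in Z(c,d) with
   a = d mod p^t.  So a standard monomial x^u y^v, lying below a step between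
   consecutive generators, has degree at most d + phi - 2, attained by
   x^(p^T - 1) y^(d - (d mod p^T) - 1).  A standard monomial of maximal degree
   is a socle element; in the Koszul complex on (x, y) it yields Tor_2 in
   degree + 2, while every Tor_i sits i above some standard monomial, so the
   regularity equals that top degree. *)

Section Koszul.
Variables (k : fieldType) (p d : nat) (c : nat -> nat).

Lemma nS_neq0 a b da db :
  (nS p d c a b da db != 0) = [&& da <= a, db <= b & ~~ inI p d c (a - da) (b - db)].
Proof. by rewrite -lt0n lt0b. Qed.

Lemma mbetti_neq0 a b i : mbetti k p d c a b i != 0 ->
  exists da db, da + db = i /\ nS p d c a b da db != 0.
Proof.
case: i => [|[|[|i]]] //= h.
- by exists 0, 0; split=> //; move: h; rewrite /kd0; lia.
- have : kd1x p d c a b + kd1y p d c a b != 0 by move: h; lia.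
  by rewrite addn_eq0 negb_and => /orP[]; [exists 1, 0 | exists 0, 1].
- by exists 1, 1; split=> //; move: h; rewrite /kd2; lia.
Qed.

Lemma betti_neq0 i j : betti k p d c i j != 0 ->
  exists u v, ~~ inI p d c u v /\ u + v + i = j.
Proof.
rewrite /betti sum_nat_eq0 negb_forall => /existsP[a /mbetti_neq0[da [db [<-]]]].
rewrite nS_neq0 => /and3P[da_le db_le nI].
exists (a - da), (j - a - db); split=> //; have := ltn_ord a; lia.
Qed.

Lemma betti2_socle u v : ~~ inI p d c u v -> inI p d c u.+1 v -> inI p d c u v.+1 ->
  betti k p d c 2 (u + v + 2) != 0.
Proof.
move=> nI Ix Iy; rewrite /betti sum_nat_eq0 negb_forall; apply/existsP.
have u_lt : u.+1 < (u + v + 2).+1 by lia.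
exists (Ordinal u_lt) => /=; have -> : u + v + 2 - u.+1 = v.+1 by lia.
have kd1_0 : kd1x p d c u.+1 v.+1 + kd1y p d c u.+1 v.+1 = 0.
  by rewrite /kd1x /kd1y /nS !subSS !subn0 Ix Iy !andbF.
have kd2_1 : kd2 p d c u.+1 v.+1 = 1 by rewrite /kd2 /nS !subSS !subn0 nI.
have := rank_leq_col (kdiff2 k p d c u.+1 v.+1); lia.
Qed.

Lemma hilb_neq0 e :
  (hilb p d c e != 0) = [exists a : 'I_e.+1, ~~ inI p d c a (e - a)].
Proof.
rewrite /hilb sum_nat_eq0 negb_forall.
by apply: eq_existsb => a; rewrite nS_neq0 !subn0.
Qed.

Lemma reg_topdeg_max_standard u0 v0 : ~~ inI p d c u0 v0 ->
    (forall u v, ~~ inI p d c u v -> u + v <= u0 + v0) ->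
  reg_is k p d c (u0 + v0)%:Z%R /\ topdeg_is p d c (u0 + v0)%:Z%R.
Proof.
move=> nI0 max0.
have [Ix Iy] : inI p d c u0.+1 v0 /\ inI p d c u0 v0.+1.
  by split; apply: contraT => /max0; rewrite ?addSn ?addnS ltnn.
split; split.
- move=> i j /eqP/betti_neq0[u [v [/max0 uv_le <-]]].
  by rewrite PoszD addrK lez_nat.
- by exists 2, (u0 + v0 + 2); rewrite PoszD addrK; split=> //; apply/eqP/betti2_socle.
- move=> e /eqP; rewrite hilb_neq0 => /existsP[a /max0].
  by rewrite lez_nat subnKC // -ltnS.
- exists (u0 + v0); split=> //; apply/eqP; rewrite hilb_neq0; apply/existsP.
  have u0_lt : u0 < (u0 + v0).+1 by rewrite ltnS leq_addr.
  by exists (Ordinal u0_lt); rewrite /= addKn.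
Qed.

End Koszul.

Lemma modn_expS p x n : x %% p ^ n.+1 = x %% p ^ n + digit p x n * p ^ n.
Proof.
rewrite /digit modn_divl -expnS addnC {1}(divn_eq (x %% p ^ n.+1) (p ^ n)).
by rewrite modn_dvdm // dvdn_exp2l.
Qed.

Lemma modn_exp_sum p x m n : m <= n ->
  x %% p ^ n = x %% p ^ m + \sum_(m <= j < n) digit p x j * p ^ j.
Proof.
move=> /subnK <-; elim: (n - m) => [|i IH]; first by rewrite big_geq ?addn0.
by rewrite addSn big_nat_recr ?leq_addl //= modn_expS IH addnA.
Qed.

Lemma leq_exp_sub_modn p x : 0 < p ->
  {homo (fun n => p ^ n - x %% p ^ n) : m n / m <= n}.
Proof.
move=> p_gt0; apply: homo_leq => [//|m n o|n]; first exact: leq_trans.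
have x_lt : x %% p ^ n < p ^ n by rewrite ltn_pmod ?expn_gt0 ?p_gt0.
have dig_le : digit p x n <= p.-1 by rewrite -ltnS prednK ?ltn_pmod.
have := leq_mul dig_le (leqnn (p ^ n)).
rewrite modn_expS expnS; nia.
Qed.

Lemma carry_le1 p a b l : 0 < p -> carry p a b l <= 1.
Proof.
move=> p_gt0; have P_gt0 : 0 < p ^ l by rewrite expn_gt0 p_gt0.
rewrite /carry -ltnS ltn_divLR //.
by have := ltn_pmod a P_gt0; have := ltn_pmod b P_gt0; lia.
Qed.

Lemma carry_eq0 p a d l : 0 < p -> a <= d ->
  (carry p a (d - a) l == 0) = (a %% p ^ l <= d %% p ^ l).
Proof.
move=> p_gt0 a_le; have P_gt0 : 0 < p ^ l by rewrite expn_gt0 p_gt0.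
have := @carry_le1 p a (d - a) l p_gt0; rewrite /carry.
have := divn_eq (a %% p ^ l + (d - a) %% p ^ l) (p ^ l).
rewrite modnDm subnKC //.
have := ltn_pmod (d - a) P_gt0.
set q := _ %/ _; case: q => [|[|//]]; lia.
Qed.

Lemma dvdn_round_up x P : 0 < P -> P %| x + (P - x %% P).
Proof.
move=> P_gt0; rewrite {1}(divn_eq x P) -addnA subnKC ?(ltnW (ltn_pmod _ _)) //.
by rewrite -mulSnr dvdn_mull.
Qed.

Lemma round_up_le x y P : 0 < P -> x %% P = y %% P -> x < y ->
  x + (P - x %% P) <= y.
Proof.
move=> P_gt0 xy_mod; rewrite {1 2}(divn_eq x P) {1 2}(divn_eq y P) xy_mod.
rewrite ltn_add2r ltn_mul2r P_gt0 /= => q_lt.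
rewrite -addnA subnKC ?(ltnW (ltn_pmod _ _)) // -mulSnr.
exact: leq_trans (leq_mul q_lt (leqnn P)) (leq_addr _ _).
Qed.

Lemma round_up_modn_le x y P Q : P %| Q -> 0 < Q ->
  x %% P = y %% P -> x %% Q < y %% Q -> (x + (P - x %% P)) %% Q <= y %% Q.
Proof.
move=> PQ Q_gt0 xy_mod lt_mod; have P_gt0 : 0 < P := dvdn_gt0 Q_gt0 PQ.
have mod_QP z : z %% Q %% P = z %% P by rewrite modn_dvdm.
have := round_up_le P_gt0 _ lt_mod; rewrite !mod_QP => /(_ xy_mod) le_y.
have lt_Q := leq_ltn_trans le_y (ltn_pmod y Q_gt0).
by rewrite -modnDml -(mod_QP x) modn_small mod_QP.
Qed.

Section Generators.
Variables (p d : nat) (c : nat -> nat).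
Hypotheses (p_gt1 : 1 < p) (d_gt0 : 0 < d).

Let p_gt0 : 0 < p := ltnW p_gt1.

Local Notation M := (topM p d).
Local Notation ts := (tseq p d c).
Local Notation T := (tt p d c (ell p d c)).

Lemma mem_tseq t : (t \in ts) = (t <= M) && inZ p d c t.
Proof. by rewrite mem_filter mem_iota add0n ltnS andbC. Qed.

Definition Zgen a : Prop := a <= d /\ {in ts, forall t, a %% p ^ t <= d %% p ^ t}.

(* If c_l = 0 but l is not in Z(c,d), then c_(l-1) = 0 and d_(l-1) = p - 1,
   so the bound at l - 1 propagates to l. *)
Lemma Zgen_carry0 a l : Zgen a -> l <= M -> c l = 0 -> a %% p ^ l <= d %% p ^ l.
Proof.
move=> [_ a_le]; elim: l => [|l IH] lM cl; first by rewrite expn0 !modn1.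
case Zl: (inZ p d c l.+1); first by apply: a_le; rewrite mem_tseq lM Zl.
move: Zl; rewrite /inZ /= cl lM eqxx /= => /negbFE/andP[/eqP cl' /eqP dl].
have dig_le : digit p a l <= p.-1 by rewrite -ltnS prednK ?ltn_pmod.
have := leq_mul dig_le (leqnn (p ^ l)).
rewrite !modn_expS dl; have := IH (ltnW lM) cl'; lia.
Qed.

Lemma genP a : gen p d c a <-> Zgen a.
Proof.
split.
- case/andP=> a_le /allP carry_le; split=> // t; rewrite mem_tseq => /andP[tM tZ].
  case: (posnP t) => [->|t_gt0]; first by rewrite !expn0 !modn1.
  move: tZ; rewrite /inZ eqn0Ngt t_gt0 /= => /and3P[_ /eqP ct _].
  have := carry_le t; rewrite mem_iota add1n ltnS t_gt0 tM => /(_ isT).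
  by rewrite /carry_pat t_gt0 tM ct leqn0 carry_eq0.
- move=> Za; have [a_le _] := Za; apply/andP; split=> //; apply/allP => l.
  rewrite mem_iota add1n ltnS => /andP[l_gt0 lM]; rewrite /carry_pat l_gt0 lM /=.
  case cl: (c l) => [|n]; last exact: leq_trans (carry_le1 _ _ _ p_gt0) _.
  by rewrite leqn0 carry_eq0 //; apply: Zgen_carry0.
Qed.

Lemma inIP u v : inI p d c u v <-> exists a, [/\ Zgen a, a <= u & d - a <= v].
Proof.
split=> [/hasP[a _ /and3P[/genP Za au av]] | [a [Za au av]]]; first by exists a.
apply/hasP; exists a; last by apply/and3P; split=> //; apply/genP.
by rewrite mem_iota add0n ltnS; case: Za.
Qed.

Lemma Zgen0 : Zgen 0.
Proof. by split=> // t _; rewrite mod0n. Qed.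

Lemma Zgen_d : Zgen d.
Proof. by split. Qed.

Lemma size_tseq : size ts = (ell p d c).+1.
Proof. by []. Qed.

Lemma tt0 : tt p d c 0 = 0.
Proof. by []. Qed.

Lemma mem_tt r : r <= ell p d c -> tt p d c r \in ts.
Proof. by move=> r_le; rewrite mem_nth // size_tseq. Qed.

Lemma tt_mono r r' : r <= r' -> r' <= ell p d c -> tt p d c r <= tt p d c r'.
Proof.
move=> le_rr' r'_le; apply: sorted_leq_nth => //.
- exact: leq_trans.
- by apply: sorted_filter; [exact: leq_trans | exact: iota_sorted].
all: rewrite inE size_tseq ltnS //; exact: leq_trans r'_le.
Qed.

Lemma tseq_leq_T t : t \in ts -> t <= T.
Proof.
move=> t_ts; rewrite -(nth_index M.+1 t_ts); apply: tt_mono => //.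
by rewrite -ltnS -size_tseq index_mem.
Qed.

Lemma expT_gt0 : 0 < p ^ T.
Proof. by rewrite expn_gt0 p_gt0. Qed.

Lemma modn_expT_lt : d %% p ^ T < p ^ T.
Proof. exact: ltn_pmod expT_gt0. Qed.

Lemma expT_le_d : p ^ T <= d.
Proof.
have := mem_tt (leqnn (ell p d c)); rewrite mem_tseq => /andP[TM _].
exact: leq_trans (leq_pexp2l p_gt0 TM) (trunc_logP p_gt1 d_gt0).
Qed.

Lemma sum_Cont n : n <= ell p d c ->
  \sum_(r < n) Cont p d c r * p ^ tt p d c r = d %% p ^ tt p d c n.
Proof.
elim: n => [|n IH] n_le; first by rewrite big_ord0 tt0 expn0 modn1.
rewrite big_ord_recr /= IH ?(ltnW n_le) // (modn_exp_sum _ _ (tt_mono (leqnSn n) n_le)).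
rewrite /Cont big_distrl /=; congr (_ + _); apply: eq_big_nat => j /andP[le_j _].
by rewrite -mulnA -expnD subnK.
Qed.

Lemma phiE : phi p d c = (p ^ T - d %% p ^ T)%:Z%R.
Proof. by rewrite /phi sum_Cont // subzn // ltnW // modn_expT_lt. Qed.

Lemma Zgen_gap x : Zgen x -> x < d ->
  exists2 y, Zgen y & x < y <= x + (p ^ T - d %% p ^ T).
Proof.
move=> [x_le x_mod] x_lt.
pose V s := (s \in ts) && (x %% p ^ s == d %% p ^ s).
have V0 : exists s, V s by exists 0; rewrite /V -{1}tt0 mem_tt //= !expn0 !modn1.
have V_le s : V s -> s <= T by case/andP=> /tseq_leq_T.
have [S /andP[S_ts /eqP xS] S_max] := ex_maxnP V0 V_le.
have P_gt0 : 0 < p ^ S by rewrite expn_gt0 p_gt0.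
exists (x + (p ^ S - x %% p ^ S)); last first.
  rewrite -{1}(addn0 x) ltn_add2l subn_gt0 ltn_pmod //= leq_add2l xS.
  exact: leq_exp_sub_modn p_gt0 _ _ (tseq_leq_T S_ts).
split=> [|t t_ts]; first exact: round_up_le.
have [tS|St] := leqP t S.
  have /eqP -> // : (x + (p ^ S - x %% p ^ S)) %% p ^ t == 0.
  exact: dvdn_trans (dvdn_exp2l p tS) (dvdn_round_up x P_gt0).
apply: round_up_modn_le (dvdn_exp2l p (ltnW St)) _ xS _.
  by rewrite expn_gt0 p_gt0.
rewrite ltn_neqAle x_mod // andbT.
by apply: contraTneq St => eq_t; rewrite -leqNgt S_max // /V t_ts eq_t eqxx.
Qed.

Lemma standard_deg_le u v : ~~ inI p d c u v ->
  u + v <= (p ^ T - 1) + (d - d %% p ^ T - 1).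
Proof.
move=> nI.
have below_gen a : Zgen a -> a <= u -> v < d - a.
  by move=> Za au; rewrite ltnNge; apply: contra nI => av; apply/inIP; exists a.
have u_lt : u < d.
  by rewrite ltnNge; apply/negP => du; have := below_gen d Zgen_d du; rewrite subnn.
have ex0 : exists a, gen p d c a && (a <= u).
  by exists 0; rewrite leq0n andbT; apply/genP/Zgen0.
have bounded a : gen p d c a && (a <= u) -> a <= u by case/andP.
have [x /andP[/genP Zx xu] x_max] := ex_maxnP ex0 bounded.
have [y Zy /andP[xy y_le]] := Zgen_gap Zx (leq_ltn_trans xu u_lt).
have u_lt_y : u < y.
  rewrite ltnNge; apply/negP => yu; have := x_max y.
  by rewrite yu andbT leqNgt xy => /(_ (proj2 (genP y) Zy)).
have := below_gen x Zx xu; have := expT_le_d; have := modn_expT_lt; lia.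
Qed.

Lemma top_standard : ~~ inI p d c (p ^ T - 1) (d - d %% p ^ T - 1).
Proof.
apply/negP => /inIP[a [[_ a_mod] a_lt a_ge]].
have := a_mod T (mem_tt (leqnn _)); rewrite modn_small; last first.
  by have := expT_gt0; lia.
have := expT_le_d; have := modn_expT_lt; lia.
Qed.
End Generators.

Theorem mainTheorem18 (k : closedFieldType) (p : nat) (hp : prime p)
    (hk : p \in [pchar k]%R) (d : nat) (hd : 1 <= d) (c : nat -> nat)
    (hc : inC p d c) :
  reg_is k p d c (d%:Z%R + phi p d c - 2)%R /\
  topdeg_is p d c (d%:Z%R + phi p d c - 2)%R.
Proof.
have p_gt1 := prime_gt1 hp.
set T := tt p d c (ell p d c).
have pT_le : p ^ T <= d := expT_le_d c p_gt1 hd.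
have DT_lt : d %% p ^ T < p ^ T := modn_expT_lt d c p_gt1.
rewrite phiE //.
have -> : (d%:Z + (p ^ T - d %% p ^ T)%:Z - 2 = (p ^ T - 1 + (d - d %% p ^ T - 1))%:Z)%R.
  by lia.
by apply: reg_topdeg_max_standard; [apply: top_standard | apply: standard_deg_le].
Qed.
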